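(* Let $r,k,s$ be integers with $k+r\neq0$, $k+s\neq0$, and let $n\ge0$ be an integer. Then \[ 5F_{k+r}F_{k+s}\;\Big|\;L_{2k+r+s}^{n+1}-(-1)^{(k+s)(n+1)}L_{r-s}^{n+1}. \] In particular, $5F_{k+r}^2\mid L_{2(k+r)}^{n+1}-(-1)^{(k+r)(n+1)}2^{n+1}$.
   Context: $F_n$ and $L_n$ denote the Fibonacci and Lucas numbers, defined for all integers $n$ by $F_0=0,F_1=1$, $L_0=2,L_1=1$ and $x_n=x_{n-1}+x_{n-2}$, with $F_{-n}=(-1)^{n-1}F_n$ and $L_{-n}=(-1)^nL_n$. *)

From Stdlib Require Import ZArith.
Open Scope Z_scope.

Definition negpow (m : Z) : Z := if Z.even m then 1 else -1.

Fixpoint fibn (n : nat) : Z :=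
  match n with
  | O => 0
  | S m => match m with O => 1 | S p => fibn m + fibn p end
  end.

Fixpoint lucn (n : nat) : Z :=
  match n with
  | O => 2
  | S m => match m with O => 1 | S p => lucn m + lucn p end
  end.

Definition F (n : Z) : Z :=
  if 0 <=? n then fibn (Z.to_nat n) else negpow (- n - 1) * fibn (Z.to_nat (- n)).

Definition L (n : Z) : Z :=
  if 0 <=? n then lucn (Z.to_nat n) else negpow (- n) * lucn (Z.to_nat (- n)).

(* Both sides of L_(a+b) - (-1)^b L_(a-b) = 5 F_a F_b satisfy the Fibonacci
   recurrence in a, so it suffices to check a = 0 and a = 1.  With a = k + r and
   b = k + s the left side is x - y for x = L_(2k+r+s) and y = (-1)^(k+s) L_(r-s),
   and x - y divides x^(n+1) - y^(n+1). *)

From Stdlib Require Import ZArith Lia.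
Open Scope Z_scope.

Lemma negpow_succ x : negpow (x + 1) = - negpow x.
Proof. unfold negpow. rewrite Z.even_add. now destruct (Z.even x). Qed.

Lemma negpow_sqr x : negpow x * negpow x = 1.
Proof. unfold negpow. now destruct (Z.even x). Qed.

Lemma negpow_mul b m : 0 <= m -> negpow (b * m) = negpow b ^ m.
Proof.
  intro Hm. pattern m. apply natlike_ind; [now rewrite Z.mul_0_r | | exact Hm].
  intros x Hx IH.
  rewrite <- Z.add_1_r, Z.mul_add_distr_l, Z.mul_1_r, Z.pow_add_r, Z.pow_1_r by lia.
  rewrite <- IH. unfold negpow. rewrite Z.even_add.
  now destruct (Z.even b), (Z.even (b * x)).
Qed.

Lemma F_nonneg n : 0 <= n -> F n = fibn (Z.to_nat n).
Proof. intro H. unfold F. now rewrite (proj2 (Z.leb_le 0 n) H). Qed.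

Lemma F_neg n : n < 0 -> F n = negpow (- n - 1) * fibn (Z.to_nat (- n)).
Proof. intro H. unfold F. now rewrite (proj2 (Z.leb_gt 0 n) H). Qed.

Lemma L_nonneg n : 0 <= n -> L n = lucn (Z.to_nat n).
Proof. intro H. unfold L. now rewrite (proj2 (Z.leb_le 0 n) H). Qed.

Lemma L_neg n : n < 0 -> L n = negpow (- n) * lucn (Z.to_nat (- n)).
Proof. intro H. unfold L. now rewrite (proj2 (Z.leb_gt 0 n) H). Qed.

Definition fib_like (u : Z -> Z) : Prop := forall n, u (n + 2) = u (n + 1) + u n.

Lemma fib_like_shift u c : fib_like u -> forall n, u (n + 2 + c) = u (n + 1 + c) + u (n + c).
Proof.
  intros Hu n.
  replace (n + 2 + c) with (n + c + 2) by ring.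
  replace (n + 1 + c) with (n + c + 1) by ring.
  apply Hu.
Qed.

Lemma fib_like_ext u v : fib_like u -> fib_like v -> u 0 = v 0 -> u 1 = v 1 ->
  forall n, u n = v n.
Proof.
  intros Hu Hv H0 H1.
  enough (Hpair : forall n, u n = v n /\ u (n + 1) = v (n + 1)) by apply Hpair.
  apply Z.peano_ind; [now split | |].
  - intros m [Em Em1]. unfold Z.succ. split; [exact Em1 |].
    replace (m + 1 + 1) with (m + 2) by ring. rewrite Hu, Hv. congruence.
  - intros m [Em Em1]. unfold Z.pred.
    pose proof (Hu (m + -1)) as Ru. pose proof (Hv (m + -1)) as Rv.
    replace (m + -1 + 2) with (m + 1) in Ru, Rv by ring.
    replace (m + -1 + 1) with m in Ru, Rv |- * by ring.
    split; [lia | exact Em].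
Qed.

Lemma F_rec : fib_like F.
Proof.
  intro n. destruct (Z_le_gt_dec 0 n).
  - rewrite !F_nonneg by lia.
    replace (Z.to_nat (n + 2)) with (S (S (Z.to_nat n))) by lia.
    replace (Z.to_nat (n + 1)) with (S (Z.to_nat n)) by lia. reflexivity.
  - destruct (Z.eq_dec n (-1)); [now subst |].
    destruct (Z.eq_dec n (-2)); [now subst |].
    rewrite !F_neg by lia.
    replace (Z.to_nat (- n)) with (S (S (Z.to_nat (- n - 2)))) by lia.
    replace (Z.to_nat (- (n + 1))) with (S (Z.to_nat (- n - 2))) by lia.
    replace (Z.to_nat (- (n + 2))) with (Z.to_nat (- n - 2)) by lia.
    replace (- n - 1) with (- n - 3 + 1 + 1) by ring.
    replace (- (n + 1) - 1) with (- n - 3 + 1) by ring.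
    replace (- (n + 2) - 1) with (- n - 3) by ring.
    rewrite !negpow_succ. simpl. ring.
Qed.

Lemma L_rec : fib_like L.
Proof.
  intro n. destruct (Z_le_gt_dec 0 n).
  - rewrite !L_nonneg by lia.
    replace (Z.to_nat (n + 2)) with (S (S (Z.to_nat n))) by lia.
    replace (Z.to_nat (n + 1)) with (S (Z.to_nat n)) by lia. reflexivity.
  - destruct (Z.eq_dec n (-1)); [now subst |].
    destruct (Z.eq_dec n (-2)); [now subst |].
    rewrite !L_neg by lia.
    replace (Z.to_nat (- n)) with (S (S (Z.to_nat (- n - 2)))) by lia.
    replace (Z.to_nat (- (n + 1))) with (S (Z.to_nat (- n - 2))) by lia.
    replace (Z.to_nat (- (n + 2))) with (Z.to_nat (- n - 2)) by lia.
    replace (- n) with (- n - 2 + 1 + 1) by ring.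
    replace (- (n + 1)) with (- n - 2 + 1) by ring.
    replace (- (n + 2)) with (- n - 2) by ring.
    rewrite !negpow_succ. simpl. ring.
Qed.

Lemma L_opp n : L (- n) = negpow n * L n.
Proof.
  assert (Hsigned : fib_like (fun m => negpow m * L (- m))).
  { intro m. pose proof (L_rec (- m - 2)) as R.
    replace (- m - 2 + 2) with (- m) in R by ring.
    replace (- m - 2 + 1) with (- (m + 1)) in R by ring.
    replace (- m - 2) with (- (m + 2)) in R by ring.
    replace (m + 2) with (m + 1 + 1) by ring. rewrite !negpow_succ.
    replace (m + 1 + 1) with (m + 2) by ring. rewrite R. ring. }
  pose proof (fib_like_ext _ _ Hsigned L_rec eq_refl eq_refl n) as E. cbv beta in E.
  rewrite <- E, Z.mul_assoc, negpow_sqr. ring.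
Qed.

Lemma L_pred_add_L_succ n : L (n - 1) + L (n + 1) = 5 * F n.
Proof.
  revert n. apply fib_like_ext; [| | reflexivity | reflexivity].
  - intro n. rewrite <- !Z.add_opp_r, !(fib_like_shift L _ L_rec). ring.
  - intro n. rewrite F_rec. ring.
Qed.

Lemma L_add_sub_L_sub a b : L (a + b) - negpow b * L (a - b) = 5 * F a * F b.
Proof.
  revert a. apply fib_like_ext.
  - intro n. rewrite <- !Z.add_opp_r, !(fib_like_shift L _ L_rec). ring.
  - intro n. cbv beta. rewrite F_rec. ring.
  - rewrite Z.add_0_l, Z.sub_0_l, L_opp, Z.mul_assoc, negpow_sqr. change (F 0) with 0. ring.
  - replace (1 - b) with (- (b - 1)) by ring.
    assert (Hb : negpow b = - negpow (b - 1)) by (rewrite <- negpow_succ; f_equal; ring).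
    rewrite L_opp, Hb, Z.mul_opp_l, Z.mul_assoc, negpow_sqr, (Z.add_comm 1 b).
    change (F 1) with 1. rewrite <- L_pred_add_L_succ. ring.
Qed.

Lemma Z_sub_divide_pow_sub x y m : 0 <= m -> (x - y | x ^ m - y ^ m).
Proof.
  intro Hm. pattern m. apply natlike_ind; [| | exact Hm].
  - exists 0. reflexivity.
  - intros k Hk [q Hq]. exists (x * q + y ^ k).
    rewrite <- Z.add_1_r, !Z.pow_add_r, !Z.pow_1_r by lia.
    replace (x ^ k * x - y ^ k * y) with (x * (x ^ k - y ^ k) + (x - y) * y ^ k) by ring.
    rewrite Hq. ring.
Qed.

Lemma L_pow_sub_divisible r k s n : 0 <= n ->
  (5 * F (k + r) * F (k + s) |
     L (2 * k + r + s) ^ (n + 1) - negpow ((k + s) * (n + 1)) * L (r - s) ^ (n + 1)).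
Proof.
  intro Hn.
  rewrite negpow_mul, <- Z.pow_mul_l, <- L_add_sub_L_sub by lia.
  replace (k + r + (k + s)) with (2 * k + r + s) by ring.
  replace (k + r - (k + s)) with (r - s) by ring.
  apply Z_sub_divide_pow_sub. lia.
Qed.

Theorem mainTheorem12 :
  (forall r k s n : Z, k + r <> 0 -> k + s <> 0 -> 0 <= n ->
     (5 * F (k + r) * F (k + s) |
        L (2 * k + r + s) ^ (n + 1)
        - negpow ((k + s) * (n + 1)) * L (r - s) ^ (n + 1)))
  /\
  (forall r k n : Z, k + r <> 0 -> 0 <= n ->
     (5 * F (k + r) ^ 2 |
        L (2 * (k + r)) ^ (n + 1) - negpow ((k + r) * (n + 1)) * 2 ^ (n + 1))).
Proof.
  split.
  - intros r k s n _ _. apply L_pow_sub_divisible.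
  - intros r k n _ Hn. pose proof (L_pow_sub_divisible r k r n Hn) as H.
    replace (2 * k + r + r) with (2 * (k + r)) in H by ring.
    rewrite Z.sub_diag in H.
    rewrite Z.pow_2_r, Z.mul_assoc. exact H.
Qed.
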